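(* Let $p\in(1,\infty)$ and let $G=(X,b,m,0)$ be a weighted graph (potential $c=0$). Let $W\subseteq X$ be such that its interior boundary $\partial_iW$ is finite. If the subgraph $G_W=(W,b|_{W\times W},m|_W,0)$ is $p$-hyperbolic, then $G$ is $p$-hyperbolic.
   Context: Weighted graph $G=(X,b,m,c)$: $X$ countably infinite; $b$ symmetric, nonnegative, zero on the diagonal, $\sum_yb(x,y)<\infty$; $m>0$; $c\ge0$; $x\sim y$ iff $b(x,y)>0$; $X$ connected. $\partial_iW=\{y\in W:y\sim z\text{ for some }z\in X\setminus W\}$. For a graph with vertex set $V$ and weight $b'$ (and potential $0$), $\mathcal{E}_p(f)=\frac12\sum_{x,y\in V}b'(x,y)|f(x)-f(y)|^p$; it is $p$-parabolic if $\inf\{\mathcal{E}_p(\varphi):\varphi\text{ finitely supported on }V,\ \varphi\ge1\text{ on }K\}=0$ for every finite $K\subseteq V$, and $p$-hyperbolic otherwise. *)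

From HB Require Import structures.
From mathcomp Require Import all_boot all_order all_algebra.
From mathcomp Require Import all_classical all_reals all_analysis.
From Stdlib Require Import Relations.
Set Implicit Arguments. Unset Strict Implicit. Unset Printing Implicit Defensive.
Import Order.TTheory GRing.Theory Num.Theory.
Local Open Scope classical_set_scope.
Local Open Scope ring_scope.

Section defs.
Context {R : realType} {X : choiceType}.

Definition weighted_graph (b : X -> X -> R) (m : X -> R) (c : X -> R) : Prop :=
  (countable [set: X] /\ ~ finite_set [set: X]) /\
  (forall x y, b x y = b y x) /\
  (forall x y, 0 <= b x y) /\
  (forall x, b x x = 0) /\
  (forall x, (\esum_(y in [set: X]) (b x y)%:E < +oo)%E) /\
  (forall x, 0 < m x) /\
  (forall x, 0 <= c x) /\
  (forall x y, clos_refl_trans X (fun u v => 0 < b u v) x y).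

Definition interior_boundary (b : X -> X -> R) (W : set X) : set X :=
  [set y | W y /\ exists z, ~ W z /\ 0 < b y z].

(* A graph with vertex set V (a subset of the ambient type X) and weight b'
   (potential 0).  Functions on V are represented by functions on X whose
   support is contained in V. *)
Definition energy (p : R) (b' : X -> X -> R) (V : set X) (f : X -> R) : \bar R :=
  ((2%:R^-1)%:E * \esum_(xy in V `*` V)
      (b' xy.1 xy.2 * powR `|f xy.1 - f xy.2| p)%:E)%E.

Definition finitely_supported_on (V : set X) (f : X -> R) : Prop :=
  finite_set [set x | f x != 0] /\ [set x | f x != 0] `<=` V.

Definition p_parabolic (p : R) (b' : X -> X -> R) (V : set X) : Prop :=
  forall K : set X, K `<=` V -> finite_set K ->
    ereal_inf [set energy p b' V f | f in
      [set f | finitely_supported_on V f /\ (forall x, K x -> 1 <= f x)]] = 0%E.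

Definition p_hyperbolic (p : R) (b' : X -> X -> R) (V : set X) : Prop :=
  ~ p_parabolic p b' V.

End defs.

From HB Require Import structures.
From mathcomp Require Import all_boot all_order all_algebra.
From mathcomp Require Import all_classical all_reals all_analysis.
Import Order.TTheory GRing.Theory Num.Theory.
Local Open Scope classical_set_scope.
Local Open Scope ring_scope.

(* Parabolicity passes from G to every subgraph G_W: restricting a test
   function phi of G to W (setting it to 0 off W) keeps its finite support
   and phi >= 1 on any K inside W, and cannot increase the energy, since the
   energy of G_W only sees edges with both ends in W.  The theorem is the
   contrapositive. *)

Section restriction.
Context {R : realType} {X : choiceType} {p : R} {b : X -> X -> R}.
Hypothesis b_ge0 : forall x y, 0 <= b x y.

Lemma energy_ge0 (V : set X) (f : X -> R) : (0 <= energy p b V f)%E.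
Proof.
rewrite /energy mule_ge0 ?lee_fin ?invr_ge0 // esum_ge0 // => -[x y] _.
by rewrite lee_fin mulr_ge0 ?powR_ge0.
Qed.

Lemma energy_restrict_le {V W : set X} (f : X -> R) :
  W `<=` V -> (energy p b W (patch (fun=> 0%R) W f) <= energy p b V f)%E.
Proof.
move=> WV; rewrite /energy lee_wpmul2l ?lee_fin ?invr_ge0 //.
rewrite (eq_esum (b := fun xy => (b xy.1 xy.2 * powR `|f xy.1 - f xy.2| p)%:E)).
  rewrite esum_mkcond [leRHS]esum_mkcond; apply: le_esum => -[x y] _ /=.
  case: ifPn => [/set_mem [/= /WV Vx /WV Vy]|_]; first by rewrite ifT // inE.
  by case: ifPn => // _; rewrite lee_fin mulr_ge0 ?powR_ge0.
by move=> -[x y] [/= Wx Wy]; rewrite !patchT ?inE.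
Qed.

Lemma finitely_supported_restrict {V : set X} (W : set X) (f : X -> R) :
  finitely_supported_on V f -> finitely_supported_on W (patch (fun=> 0%R) W f).
Proof.
move=> [finf _]; split => [|x].
  apply: sub_finite_set finf => x /=.
  by rewrite /patch; case: ifPn; rewrite ?eqxx.
by rewrite /= /patch; case: ifPn => [/set_mem|]; rewrite ?eqxx.
Qed.

Lemma p_parabolic_subset {V W : set X} :
  W `<=` V -> p_parabolic p b V -> p_parabolic p b W.
Proof.
move=> WV parV K KW finK; apply/eqP; rewrite eq_le; apply/andP; split.
  rewrite -(parV K (subset_trans KW WV) finK).
  apply: le_ereal_inf_tmp => _ [f [suppf Kf] <-].
  apply: (le_trans _ (energy_restrict_le f WV)); apply: ereal_inf_lbound.
  exists (patch (fun=> 0%R) W f) => //.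
  split; first exact: finitely_supported_restrict suppf.
  by move=> x Kx; rewrite patchT ?inE ?Kf //; exact: KW.
by apply: le_ereal_inf_tmp => _ [f _ <-]; exact: energy_ge0.
Qed.

Lemma p_hyperbolic_supset {V W : set X} :
  W `<=` V -> p_hyperbolic p b W -> p_hyperbolic p b V.
Proof. by move=> WV hypW /(p_parabolic_subset WV). Qed.

End restriction.

Theorem proposition4p7 (R : realType) (X : choiceType) (b : X -> X -> R)
  (m : X -> R) (p : R) (W : set X) :
  1 < p ->
  weighted_graph b m (fun _ => 0) ->
  finite_set (interior_boundary b W) ->
  p_hyperbolic p b W ->
  p_hyperbolic p b [set: X].
Proof.
move=> _ [_ [_ [b_ge0 _]]] _.
by apply: (p_hyperbolic_supset b_ge0); exact: subsetT.
Qed.
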